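(* Let $L$ be a finite commutative C-loop. Then $L$ is (isomorphic to, via $(u,v)\mapsto uv$) the direct product $U\times V$, where $U=\{x\in L: |x|\text{ is a power of }2\}$ and $V=\{x\in L: |x|\text{ is odd}\}$; here $V$ is a commutative group and $U$ is a commutative C-loop in which every element has order a power of $2$. Consequently every finite commutative C-loop is a direct product of a finite commutative group and a finite commutative $2$-C-loop.
   Context: A C-loop is a loop satisfying $x(y(yz))=((xy)y)z$ for all $x,y,z$; C-loops are power associative and $|x|$ denotes the order of $x$, the least $n>0$ with $x^n=e$. A $2$-loop is a finite power associative loop of exponent $2^s$ for some $s$ (every element has order a power of $2$). *)

From mathcomp Require Import all_boot.
Set Implicit Arguments. Unset Strict Implicit. Unset Printing Implicit Defensive.

Definition is_loop (T : Type) (mul : T -> T -> T) (e : T) : Prop :=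
  (forall x, mul e x = x /\ mul x e = x) /\
  (forall a, bijective (mul a)) /\
  (forall a, bijective (fun x => mul x a)).

Definition commutative_op (T : Type) (mul : T -> T -> T) : Prop :=
  forall x y, mul x y = mul y x.

Definition C_law (T : Type) (mul : T -> T -> T) : Prop :=
  forall x y z, mul x (mul y (mul y z)) = mul (mul (mul x y) y) z.

(* x^n (well defined in power-associative loops: x^0 = e, x^(n+1) = x x^n). *)
Definition lpow (T : Type) (mul : T -> T -> T) (e : T) (x : T) (n : nat) : T :=
  iter n (mul x) e.

Definition has_order (T : Type) (mul : T -> T -> T) (e : T) (x : T) (n : nat) : Prop :=
  0 < n /\ lpow mul e x n = e /\ (forall m, 0 < m -> m < n -> lpow mul e x m <> e).

Definition two_part (T : Type) (mul : T -> T -> T) (e : T) (x : T) : Prop :=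
  exists k, has_order mul e x (2 ^ k).

Definition odd_part (T : Type) (mul : T -> T -> T) (e : T) (x : T) : Prop :=
  exists n, odd n /\ has_order mul e x n.

From mathcomp Require Import all_boot.
Set Implicit Arguments. Unset Strict Implicit. Unset Printing Implicit Defensive.

(* In a commutative C-loop every square lies in the nucleus; this yields
   power associativity, (xy)^2 = x^2 y^2, and puts every element of odd order
   m in the nucleus, since x = (x^2)^((m+1)/2).  For x of order 2^k m with m
   odd, the Chinese remainder theorem splits x = x^c x^d with x^c of 2-power
   order and x^d of odd order, and the two parts meet only in e. *)

Section CommutativeCLoop.

Variables (T : choiceType) (mul : T -> T -> T) (e : T).
Hypotheses (loopT : is_loop mul e) (mulC : commutative_op mul) (CT : C_law mul).

Local Notation "x ** y" := (mul x y) (at level 40, left associativity).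
Local Notation pw := (lpow mul e).

Lemma mul1l x : e ** x = x. Proof. by case: loopT => /(_ x) []. Qed.
Lemma mull1 x : x ** e = x. Proof. by case: loopT => /(_ x) []. Qed.

Lemma mullI a : injective (mul a).
Proof. by case: loopT => _ [/(_ a) /bij_inj]. Qed.

Lemma mulIl a : injective (mul^~ a).
Proof. by move=> x y; rewrite (mulC x) (mulC y); apply: mullI. Qed.

Lemma mull_surj a t : exists u, a ** u == t.
Proof. by case: loopT => _ [/(_ a) [g _ K] _]; exists (g t); rewrite K. Qed.

Lemma left_alternative y z : y ** (y ** z) = (y ** y) ** z.
Proof. by have := CT e y z; rewrite !mul1l. Qed.

Lemma right_alternative x y : (x ** y) ** y = x ** (y ** y).
Proof. by have := CT x y e; rewrite !mull1. Qed.

Lemma sq_middle_assoc x y z : x ** ((y ** y) ** z) = (x ** (y ** y)) ** z.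
Proof. by have := CT x y z; rewrite left_alternative right_alternative. Qed.

Definition linv x := xchoose (mull_surj x e).

Lemma mullV x : x ** linv x = e. Proof. exact/eqP/(xchooseP (mull_surj x e)). Qed.
Lemma mulVl x : linv x ** x = e. Proof. by rewrite mulC mullV. Qed.

Lemma mullK y : cancel (mul^~ y) (mul^~ (linv y)).
Proof.
move=> t; have [u <-] : exists u, u ** y = t.
  by have [u /eqP yu_t] := mull_surj y t; exists u; rewrite mulC.
by rewrite right_alternative -sq_middle_assoc -left_alternative mullV mull1.
Qed.

Lemma mulKl y : cancel (mul y) (mul (linv y)).
Proof. by move=> t; rewrite mulC (mulC y) mullK. Qed.

Lemma linvK : involutive linv.
Proof. by move=> x; apply: (@mullI (linv x)); rewrite mullV mulVl. Qed.

Lemma mulKVl y : cancel (mul (linv y)) (mul y).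
Proof. by move=> t; rewrite -{1}(linvK y) mulKl. Qed.

Lemma linv1 : linv e = e. Proof. by rewrite -[linv e]mul1l mullV. Qed.

Lemma linvM x y : linv (x ** y) = linv x ** linv y.
Proof.
have inv_x : linv (x ** y) ** x = linv y by rewrite -{2}(mullK y x) mulKl.
by rewrite -(mullK x (linv (x ** y))) inv_x mulC.
Qed.

(* In a commutative loop the left nucleus is the whole nucleus. *)
Definition nuclear a := forall x y, (a ** x) ** y = a ** (x ** y).

Lemma nuclear_midA a : nuclear a -> forall x y, x ** (a ** y) = (x ** a) ** y.
Proof. by move=> Na x y; rewrite (mulC x a) Na (mulC x y) -Na mulC. Qed.

Lemma nuclear_rightA a : nuclear a -> forall x y, (x ** y) ** a = x ** (y ** a).
Proof.
by move=> Na x y; rewrite mulC -Na (mulC a x) -nuclear_midA // (mulC a y).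
Qed.

Lemma linv_nuclear a : nuclear (linv a) -> nuclear a.
Proof. by move=> Na z y; have := Na (a ** z) y; rewrite mulKl => ->; rewrite mulKVl. Qed.

Lemma nuclearV a : nuclear a -> nuclear (linv a).
Proof. by move=> Na; apply: linv_nuclear; rewrite linvK. Qed.

Lemma mid_nuclear a :
  (forall x z, x ** (a ** z) = (x ** a) ** z) -> nuclear a.
Proof.
move=> midA; apply: linv_nuclear => p v.
set w := linv a ** (p ** v).
have v_def : v = (linv p ** a) ** w by rewrite -midA /w mulKVl mulKl.
have p_div : linv a ** p = linv (linv p ** a) by rewrite linvM linvK mulC.
by rewrite p_div {1}v_def mulKl.
Qed.

Lemma nuclear_sq y : nuclear (y ** y).
Proof. by apply: mid_nuclear => x z; apply: sq_middle_assoc. Qed.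

Lemma nuclear1 : nuclear e. Proof. by move=> x y; rewrite !mul1l. Qed.

Lemma nuclearM a b : nuclear a -> nuclear b -> nuclear (a ** b).
Proof. by move=> Na Nb x y; rewrite Na Na Nb -Na. Qed.

Lemma mullACA_nuclear u1 v1 u2 v2 : nuclear v1 -> nuclear v2 ->
  (u1 ** v1) ** (u2 ** v2) = (u1 ** u2) ** (v1 ** v2).
Proof.
move=> N1 N2; rewrite -(nuclear_midA N1) -N1 (mulC v1 u2) -(nuclear_midA N1).
by rewrite (nuclear_rightA (nuclearM N1 N2)).
Qed.

Lemma sqM x y : (x ** y) ** (x ** y) = (x ** x) ** (y ** y).
Proof.
have sq_div : ((x ** x) ** (y ** y)) ** linv (x ** y) = x ** y.
  rewrite linvM (nuclear_sq x) (mulC (linv x)) -(nuclear_sq y) -(left_alternative y).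
  by rewrite mullV mull1 (mulC y) -(nuclear_sq x) -(left_alternative x) mullV mull1.
by rewrite -[RHS](mullK (linv (x ** y))) sq_div linvK.
Qed.

Lemma lpowS x n : pw x n.+1 = x ** pw x n. Proof. by []. Qed.
Lemma lpow1 x : pw x 1 = x. Proof. exact: mull1. Qed.
Lemma lpow2 x : pw x 2 = x ** x. Proof. by rewrite lpowS lpow1. Qed.
Lemma lpow1n n : pw e n = e. Proof. by elim: n => // n IH; rewrite lpowS IH mul1l. Qed.

Lemma lpowSS x n : pw x n.+2 = (x ** x) ** pw x n.
Proof. by rewrite !lpowS left_alternative. Qed.

Lemma lpowD x m n : pw x (m + n) = pw x m ** pw x n.
Proof.
elim/ltn_ind: m => -[|[|m]] IH; first by rewrite mul1l.
  by rewrite add1n lpow1.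
by rewrite !addSn lpowSS IH ?(leqW (leqnn _)) // lpowSS nuclear_sq.
Qed.

Lemma lpowM x m n : pw x (m * n) = pw (pw x m) n.
Proof. by elim: n => [|n IH]; rewrite ?muln0 // mulnS lpowD IH. Qed.

Lemma nuclear_lpow a n : nuclear a -> nuclear (pw a n).
Proof. by move=> Na; elim: n => [|n IH]; [apply: nuclear1 | apply: nuclearM]. Qed.

Lemma lpowMn a b n : nuclear b -> pw (a ** b) n = pw a n ** pw b n.
Proof.
move=> Nb; elim: n => [|n IH]; first by rewrite mul1l.
by rewrite !lpowS IH mullACA_nuclear //; apply: nuclear_lpow.
Qed.

Lemma lpowV x n : pw (linv x) n = linv (pw x n).
Proof. by elim: n => [|n IH]; rewrite ?linv1 // !lpowS IH linvM. Qed.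

Lemma lpow_eq1_dvdn x n m : pw x n = e -> n %| m -> pw x m = e.
Proof. by move=> xn_1 /dvdnP [c ->]; rewrite mulnC lpowM xn_1 lpow1n. Qed.

Lemma lpow_modn x n m : pw x n = e -> pw x m = pw x (m %% n).
Proof.
by move=> xn_1; rewrite {1}(divn_eq m n) lpowD (lpow_eq1_dvdn xn_1) ?dvdn_mull ?mul1l.
Qed.

Lemma has_order_dvdn x n : has_order mul e x n ->
  forall m, pw x m = e <-> n %| m.
Proof.
case=> n_gt0 [xn_1 min_n] m; rewrite (lpow_modn m xn_1).
split=> [xm_1|/eqP->] //; apply/eqP; case: (posnP (m %% n)) => // m_gt0.
by case: (min_n _ m_gt0 (ltn_pmod m n_gt0)).
Qed.

Lemma has_order_uniq x m n :
  has_order mul e x m -> has_order mul e x n -> m = n.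
Proof.
move=> ord_m ord_n; apply/eqP; rewrite eqn_dvd; apply/andP; split.
  by apply/(has_order_dvdn ord_m); case: ord_n => _ [].
by apply/(has_order_dvdn ord_n); case: ord_m => _ [].
Qed.

Lemma odd_part_nuclear x : odd_part mul e x -> nuclear x.
Proof.
case=> m [odd_m [_ [xm_1 _]]].
have -> : x = pw (x ** x) (m.+1)./2.
  have half_m1 : (m.+1)./2.*2 = m.+1 by rewrite -[RHS]odd_double_half /= odd_m.
  by rewrite -lpow2 -lpowM mul2n half_m1 lpowS xm_1 mull1.
exact: nuclear_lpow (nuclear_sq x).
Qed.

Lemma two_odd_part_eq1 x : two_part mul e x -> odd_part mul e x -> x = e.
Proof.
case=> k ord_k [n [odd_n ord_n]].
move: odd_n; rewrite -(has_order_uniq ord_k ord_n) oddX orbF => /eqP k0.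
by move: ord_k; rewrite k0 => -[_ [x1_1 _]]; rewrite -(lpow1 x).
Qed.

Section Torsion.

Hypothesis torsion : forall x, exists2 n, 0 < n & pw x n = e.

Lemma exists_order x : exists n, has_order mul e x n.
Proof.
have ex_n : exists n, (0 < n) && (pw x n == e).
  by have [n n_gt0 xn_1] := torsion x; exists n; rewrite n_gt0 xn_1 eqxx.
case: (ex_minnP ex_n) => n /andP [n_gt0 /eqP xn_1] min_n.
exists n; split=> //; split=> // m m_gt0 lt_mn xm_1.
by have := min_n m; rewrite m_gt0 xm_1 eqxx leqNgt lt_mn => /(_ isT).
Qed.

Lemma two_partP x : two_part mul e x <-> exists k, pw x (2 ^ k) = e.
Proof.
split=> [[k [_ [xk_1 _]]] | [k xk_1]]; first by exists k.
have [n ord_n] := exists_order x.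
have /dvdn_pfactor [//|j _ n_def] : n %| 2 ^ k by apply/(has_order_dvdn ord_n).
by exists j; rewrite -n_def.
Qed.

Lemma odd_partP x : odd_part mul e x <-> exists2 m, odd m & pw x m = e.
Proof.
split=> [[m [odd_m [_ [xm_1 _]]]] | [m odd_m xm_1]]; first by exists m.
have [n ord_n] := exists_order x.
have /dvdnP [c m_def] : n %| m by apply/(has_order_dvdn ord_n).
by exists n; split=> //; move: odd_m; rewrite m_def oddM => /andP [].
Qed.

Lemma two_part1 : two_part mul e e.
Proof. by apply/two_partP; exists 0; rewrite lpow1. Qed.

Lemma odd_part1 : odd_part mul e e.
Proof. by apply/odd_partP; exists 1; rewrite ?lpow1. Qed.

Lemma two_part_mul x y :
  two_part mul e x -> two_part mul e y -> two_part mul e (x ** y).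
Proof.
move=> /two_partP [a xa_1] /two_partP [b yb_1]; apply/two_partP.
exists (a + b).+1; rewrite expnS lpowM lpow2 sqM lpowMn; last exact: nuclear_sq.
rewrite -!lpow2 -!lpowM (lpow_eq1_dvdn xa_1) ?(lpow_eq1_dvdn yb_1) ?mul1l //.
  by rewrite -expnS dvdn_exp2l // leqW // leq_addl.
by rewrite -expnS dvdn_exp2l // leqW // leq_addr.
Qed.

Lemma two_part_linv x : two_part mul e x -> two_part mul e (linv x).
Proof.
by move=> /two_partP [k xk_1]; apply/two_partP; exists k; rewrite lpowV xk_1 linv1.
Qed.

Lemma odd_part_mul x y :
  odd_part mul e x -> odd_part mul e y -> odd_part mul e (x ** y).
Proof.
move=> Vx Vy; have Ny := odd_part_nuclear Vy.
move: Vx Vy => /odd_partP [m odd_m xm_1] /odd_partP [n odd_n yn_1].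
apply/odd_partP; exists (m * n); first by rewrite oddM odd_m odd_n.
rewrite lpowMn // (lpow_eq1_dvdn xm_1 (dvdn_mulr n (dvdnn m))).
by rewrite (lpow_eq1_dvdn yn_1 (dvdn_mull m (dvdnn n))) mul1l.
Qed.

Lemma odd_part_linv x : odd_part mul e x -> odd_part mul e (linv x).
Proof.
move=> /odd_partP [m odd_m xm_1]; apply/odd_partP.
by exists m; rewrite // lpowV xm_1 linv1.
Qed.

Lemma two_odd_decomposition x :
  exists u v, [/\ two_part mul e u, odd_part mul e v & x = u ** v].
Proof.
have [n ord_n] := exists_order x; have n_gt0 : 0 < n by case: ord_n.
have [m co_2m n_def] := pfactor_coprime (isT : prime 2) n_gt0.
set k := logn 2 n in n_def.
have co_km : coprime (2 ^ k) m := coprimeXl k co_2m.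
set c := chinese (2 ^ k) m 1 0; set d := chinese (2 ^ k) m 0 1.
exists (pw x c), (pw x d); split.
- apply/two_partP; exists k; rewrite -lpowM; apply/(has_order_dvdn ord_n).
  by rewrite n_def dvdn_mul // /dvdn chinese_modr // mod0n.
- apply/odd_partP; exists m; first by rewrite -coprime2n.
  rewrite -lpowM; apply/(has_order_dvdn ord_n).
  by rewrite n_def mulnC dvdn_mul // /dvdn chinese_modl // mod0n.
- have cd_1 : c + d = 1 %[mod n].
    apply/eqP; rewrite n_def mulnC chinese_remainder //; apply/andP; split.
      by rewrite -modnDm !chinese_modl // modnDm addn0.
    by rewrite -modnDm !chinese_modr // modnDm add0n.
  have [_ [xn_1 _]] := ord_n.
  by rewrite -lpowD (lpow_modn _ xn_1) cd_1 -(lpow_modn _ xn_1) lpow1.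
Qed.

Lemma two_odd_decomposition_uniq u1 v1 u2 v2 :
  two_part mul e u1 -> odd_part mul e v1 ->
  two_part mul e u2 -> odd_part mul e v2 ->
  u1 ** v1 = u2 ** v2 -> u1 = u2 /\ v1 = v2.
Proof.
move=> Uu1 Vv1 Uu2 Vv2 eq_uv.
pose w := v2 ** linv v1.
have u1_def : u1 = u2 ** w.
  by rewrite /w -(nuclear_rightA (nuclearV (odd_part_nuclear Vv1))) -eq_uv mullK.
have Uw : two_part mul e w.
  by rewrite -(mulKl u2 w) -u1_def mulC; apply: two_part_mul (two_part_linv _).
have Vw : odd_part mul e w by apply: odd_part_mul (odd_part_linv _).
have eq_u : u1 = u2 by rewrite u1_def (two_odd_part_eq1 Uw Vw) mull1.
by split=> //; apply: (@mullI u1); rewrite {2}eq_u.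
Qed.

End Torsion.

End CommutativeCLoop.

Lemma finite_CLoop_torsion (T : finType) (mul : T -> T -> T) (e : T) :
  is_loop mul e -> commutative_op mul -> C_law mul ->
  forall x, exists2 n, 0 < n & lpow mul e x n = e.
Proof.
move=> loopT mulC CT x; pose f (i : 'I_#|T|.+1) := lpow mul e x i.
have period i j : i < j -> lpow mul e x i = lpow mul e x j ->
    exists2 n, 0 < n & lpow mul e x n = e.
  move=> lt_ij eq_ij; exists (j - i); first by rewrite subn_gt0.
  apply: (@mulIl _ _ _ loopT mulC (lpow mul e x i)).
  by rewrite -lpowD // subnK ?(ltnW lt_ij) // mul1l.
have /injectivePn [i [j neq_ij eq_ij]] : ~~ injectiveb f.
  by apply/injectiveP => /leq_card; rewrite card_ord ltnn.
move: neq_ij; rewrite neq_ltn => /orP [lt_ij | lt_ji].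
  exact: period lt_ij eq_ij.
exact: period lt_ji (esym eq_ij).
Qed.

Theorem theorem7p3 (T : finType) (mul : T -> T -> T) (e : T) :
  is_loop mul e -> commutative_op mul -> C_law mul ->
  let U := two_part mul e in
  let V := odd_part mul e in
  (U e /\ forall x y, U x -> U y -> U (mul x y)) /\
  (V e /\ forall x y, V x -> V y -> V (mul x y)) /\
  (forall x y z, V x -> V y -> V z -> mul x (mul y z) = mul (mul x y) z) /\
  (forall x, exists u v, [/\ U u, V v & x = mul u v]) /\
  (forall u1 v1 u2 v2, U u1 -> V v1 -> U u2 -> V v2 ->
     mul u1 v1 = mul u2 v2 -> u1 = u2 /\ v1 = v2) /\
  (forall u1 v1 u2 v2, U u1 -> V v1 -> U u2 -> V v2 ->
     mul (mul u1 v1) (mul u2 v2) = mul (mul u1 u2) (mul v1 v2)).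
Proof.
move=> loopT mulC CT; have torsion := finite_CLoop_torsion loopT mulC CT.
have odd_nuclear := @odd_part_nuclear _ _ _ loopT mulC CT.
cbv zeta; split; first by split; [exact: two_part1 | exact: two_part_mul].
split; first by split; [exact: odd_part1 | exact: odd_part_mul].
split=> [x y z _ Vy _|]; first exact: (nuclear_midA mulC (odd_nuclear y Vy)).
split; first exact: two_odd_decomposition.
split; first exact: two_odd_decomposition_uniq.
move=> u1 v1 u2 v2 _ Vv1 _ Vv2.
exact: (mullACA_nuclear mulC u1 u2 (odd_nuclear v1 Vv1) (odd_nuclear v2 Vv2)).
Qed.
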